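(* Let $\omega\in\Omega$. Let $x\in\mathbb{Z}^2$ lie in an infinite $0$-cluster and $y\in\mathbb{Z}^2$ lie in an infinite $1$-cluster, and let $\ell_{xy}$ be a path of edges of $G$ from $x$ to $y$. Then the total number of crossings of $\ell_{xy}$ with infinite contours of $\phi(\omega)$ (i.e. the number of edges of $\ell_{xy}$, counted with multiplicity, crossed by an edge belonging to an infinite contour) is odd. In particular, if $\omega$ has both an infinite $0$-cluster and an infinite $1$-cluster, then $\phi(\omega)$ has an infinite contour.
   Context: Let $G$ be the square grid with vertex set $\mathbb{Z}^2$ and nearest-neighbour edges. The face of $G$ with lower-left corner $(m,n)$ is black if $m+n$ is even, white otherwise. $\Omega\subset\{0,1\}^{\mathbb{Z}^2}$ is the set of $\omega$ such that for every black face the states of its four vertices, listed clockwise from the lower-left corner, form one of $0000,1111,0011,1100,0110,1001$. A cluster of $\omega$ is a maximal $G$-connected set of vertices on which $\omega$ is constant ($0$- or $1$-cluster), infinite if it has infinitely many vertices. Let $\mathbb{L}_1$ have vertices $(m-\tfrac12,n+\tfrac12)$, $m,n$ both even, and $\mathbb{L}_2$ vertices $(m-\tfrac12,n+\tfrac12)$, $m,n$ both odd; in each, two vertices are joined by an edge (a segment of length $2$) iff at Euclidean distance $2$. Every edge of $G$ is crossed by exactly one edge of $\mathbb{L}_1\cup\mathbb{L}_2$. The center of each black face $F$ is the midpoint of exactly one edge $e_1$ of $\mathbb{L}_1$ and one edge $e_2$ of $\mathbb{L}_2$. Define $\phi(\omega)\in\{0,1\}^{E(\mathbb{L}_1)\cup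 E(\mathbb{L}_2)}$: if the configuration around $F$ is $0000$ or $1111$ both get $0$; if the two upper vertices share a state different from the two lower ones, the horizontal one of $e_1,e_2$ gets $1$, the vertical $0$; if the two left vertices share a state different from the two right ones, the vertical one gets $1$, the horizontal $0$. Edges with value $1$ are present; a contour is a connected component of the set of present edges, infinite if it has infinitely many edges. *)

From Stdlib Require Import ZArith List Relations Bool ClassicalEpsilon.
Open Scope Z_scope.

Definition V := (Z * Z)%type.
Definition config := V -> bool.

Definition adjG (u v : V) : Prop :=
  (fst u = fst v /\ (snd v = snd u + 1 \/ snd u = snd v + 1)) \/
  (snd u = snd v /\ (fst v = fst u + 1 \/ fst u = fst v + 1)).

(* face with lower-left corner (m,n) is black iff m+n is even *)
Definition black (m n : Z) : Prop := Z.even (m + n) = true.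

(* states listed clockwise from lower-left: LL, UL, UR, LR *)
Definition allowed (s0 s1 s2 s3 : bool) : Prop :=
  (s0, s1, s2, s3) = (false, false, false, false) \/
  (s0, s1, s2, s3) = (true, true, true, true) \/
  (s0, s1, s2, s3) = (false, false, true, true) \/
  (s0, s1, s2, s3) = (true, true, false, false) \/
  (s0, s1, s2, s3) = (false, true, true, false) \/
  (s0, s1, s2, s3) = (true, false, false, true).

Definition Omega (w : config) : Prop :=
  forall m n, black m n ->
    allowed (w (m, n)) (w (m, n + 1)) (w (m + 1, n + 1)) (w (m + 1, n)).

(* The dual vertex (m-1/2, n+1/2) is encoded by the integer
   pair (m,n); it is in L1 if m,n are both even, in L2 if both odd.
   DH p q : horizontal edge from (p,q) to (p+2,q)  (real: (p-1/2,q+1/2)--(p+3/2,q+1/2))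
   DV p q : vertical edge from (p,q) to (p,q+2)    (real: (p-1/2,q+1/2)--(p-1/2,q+5/2))
   Such a term is an edge of L1 ∪ L2 iff p ≡ q (mod 2). *)
Inductive DEdge : Type := DH (p q : Z) | DV (p q : Z).

Definition dedge_valid (e : DEdge) : Prop :=
  match e with DH p q => Z.even (p + q) = true | DV p q => Z.even (p + q) = true end.

Definition endpoints (e : DEdge) : list V :=
  match e with
  | DH p q => (p, q) :: (p + 2, q) :: nil
  | DV p q => (p, q) :: (p, q + 2) :: nil
  end.

Definition share_endpoint (e f : DEdge) : Prop :=
  exists v, In v (endpoints e) /\ In v (endpoints f).

Definition hsplit (w : config) (a b : Z) : bool :=
  eqb (w (a, b + 1)) (w (a + 1, b + 1)) && eqb (w (a, b)) (w (a + 1, b))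
  && negb (eqb (w (a, b + 1)) (w (a, b))).
Definition vsplit (w : config) (a b : Z) : bool :=
  eqb (w (a, b)) (w (a, b + 1)) && eqb (w (a + 1, b)) (w (a + 1, b + 1))
  && negb (eqb (w (a, b)) (w (a + 1, b))).

(* The midpoint of DH p q is the centre of the face with lower-left (p,q);
   the midpoint of DV p q is the centre of the face with lower-left (p-1,q+1). *)
Definition phi (w : config) (e : DEdge) : bool :=
  match e with
  | DH p q => hsplit w p q
  | DV p q => vsplit w (p - 1) (q + 1)
  end.

Definition present (w : config) (e : DEdge) : Prop :=
  dedge_valid e /\ phi w e = true.

Definition contour_rel (w : config) (e f : DEdge) : Prop :=
  present w e /\ present w f /\ share_endpoint e f.

Definition same_contour (w : config) (e f : DEdge) : Prop :=
  present w e /\ clos_refl_trans DEdge (contour_rel w) e f.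

Definition infinite_set {T : Type} (S : T -> Prop) : Prop :=
  forall l : list T, exists x, S x /\ ~ In x l.

Definition in_infinite_contour (w : config) (e : DEdge) : Prop :=
  present w e /\ infinite_set (same_contour w e).

Definition cluster_rel (w : config) (u v : V) : Prop := adjG u v /\ w u = w v.
Definition same_cluster (w : config) (x z : V) : Prop :=
  clos_refl_trans V (cluster_rel w) x z.
Definition in_infinite_cluster (w : config) (b : bool) (x : V) : Prop :=
  w x = b /\ infinite_set (same_cluster w x).

Definition crosses (e : DEdge) (u v : V) : Prop :=
  match e with
  | DH p q => (* y = q+1/2, x in [p-1/2, p+3/2]; G-edge vertical *)
      fst u = fst v /\ Z.min (snd u) (snd v) = q /\ p <= fst u <= p + 1
  | DV p q => (* x = p-1/2, y in [q+1/2, q+5/2]; G-edge horizontal *)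
      snd u = snd v /\ Z.min (fst u) (fst v) = p - 1 /\ q + 1 <= snd u <= q + 2
  end.

(* path of G-edges x = v0, v1, ..., vk given as x and the list [v1;...;vk] *)
Fixpoint gpath (x : V) (l : list V) : Prop :=
  match l with
  | nil => True
  | v :: l' => adjG x v /\ gpath v l'
  end.

Definition gpath_from_to (x y : V) (l : list V) : Prop :=
  gpath x l /\ last l x = y.

Fixpoint crossing_count (w : config) (x : V) (l : list V) : nat :=
  match l with
  | nil => 0%nat
  | v :: l' =>
      ((if excluded_middle_informative
             (exists e, dedge_valid e /\ crosses e x v /\ in_infinite_contour w e)
        then 1 else 0) + crossing_count w v l')%nat
  end.

(* Across a G-edge the crossing dual edge is present exactly when the endpoint states
   differ, so a path from a 0 to a 1 crosses present dual edges an odd number of times.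
   The finite contours met by the path form a finite set C of present edges that is
   closed under adjacency among present edges.  Every face of G is crossed an even number
   of times by C: a black face is bisected by a single dual edge, and the centre of a white
   face is a dual vertex whose present degree is even.  Hence, over Z/2, C is the
   coboundary of a finitely supported potential s on Z^2.  No present edge crosses a
   cluster edge, so s is constant on clusters and vanishes on infinite ones; the path
   therefore crosses C an even number of times, and its crossings with infinite contours
   are odd in number. *)

From Stdlib Require Import ZArith List Lia Bool Classical ClassicalEpsilon Relations.
Open Scope Z_scope.

Definition asbool (P : Prop) : bool := if excluded_middle_informative P then true else false.

Lemma asboolT (P : Prop) : P -> asbool P = true.
Proof. unfold asbool; destruct excluded_middle_informative; tauto. Qed.

Lemma asboolF (P : Prop) : ~ P -> asbool P = false.
Proof. unfold asbool; destruct excluded_middle_informative; tauto. Qed.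

Lemma asbool_iff (P Q : Prop) : (P <-> Q) -> asbool P = asbool Q.
Proof. unfold asbool; do 2 destruct excluded_middle_informative; tauto. Qed.

Lemma asbool_true_iff (P : Prop) : asbool P = true <-> P.
Proof. unfold asbool; destruct excluded_middle_informative; split; auto; discriminate. Qed.

Lemma asbool_eq_true (b : bool) : asbool (b = true) = b.
Proof. destruct b; [apply asboolT | apply asboolF]; congruence. Qed.

Ltac destruct_parity :=
  repeat match goal with
  | H : Z.even _ = true |- _ => apply Z.even_spec in H; destruct H
  | H : Z.even _ = false |- _ =>
      rewrite <- Bool.negb_true_iff, Z.negb_even in H; apply Z.odd_spec in H; destruct H
  end.

Lemma adjG_cases (a b : Z) (v : V) : adjG (a, b) v ->
  v = (a, b + 1) \/ v = (a, b - 1) \/ v = (a + 1, b) \/ v = (a - 1, b).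
Proof.
  destruct v as [c d]; unfold adjG; simpl.
  intros [[-> [-> | ->]] | [-> [-> | ->]]];
    [left | right; left | right; right; left | right; right; right]; f_equal; lia.
Qed.

(* The dual edges crossing the G-edges from [(a, b)] upwards and to the right: of the two
   candidates sharing the centre of a face, the parity of [a + b] tells which one lies in
   L1 u L2. *)
Definition dual_vertical (a b : Z) : DEdge :=
  if Z.even (a + b) then DH a b else DH (a - 1) b.
Definition dual_horizontal (a b : Z) : DEdge :=
  if Z.even (a + b) then DV (a + 1) (b - 1) else DV (a + 1) (b - 2).

Definition dual_edge (u v : V) : DEdge :=
  if Z.eqb (fst u) (fst v) then dual_vertical (fst u) (Z.min (snd u) (snd v))
  else dual_horizontal (Z.min (fst u) (fst v)) (snd u).

Lemma dual_edge_up (a b : Z) : dual_edge (a, b) (a, b + 1) = dual_vertical a b.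
Proof. unfold dual_edge; simpl. rewrite Z.eqb_refl, Z.min_l by lia. reflexivity. Qed.

Lemma dual_edge_down (a b : Z) : dual_edge (a, b) (a, b - 1) = dual_vertical a (b - 1).
Proof. unfold dual_edge; simpl. rewrite Z.eqb_refl, Z.min_r by lia. reflexivity. Qed.

Lemma dual_edge_right (a b : Z) : dual_edge (a, b) (a + 1, b) = dual_horizontal a b.
Proof.
  unfold dual_edge; simpl. rewrite (proj2 (Z.eqb_neq a (a + 1))), Z.min_l by lia.
  reflexivity.
Qed.

Lemma dual_edge_left (a b : Z) : dual_edge (a, b) (a - 1, b) = dual_horizontal (a - 1) b.
Proof.
  unfold dual_edge; simpl. rewrite (proj2 (Z.eqb_neq a (a - 1))), Z.min_r by lia.
  reflexivity.
Qed.

Lemma dual_vertical_valid (a b : Z) : dedge_valid (dual_vertical a b).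
Proof.
  unfold dual_vertical; destruct (Z.even (a + b)) eqn:E; simpl; auto.
  destruct_parity. apply Z.even_spec. exists x. lia.
Qed.

Lemma dual_horizontal_valid (a b : Z) : dedge_valid (dual_horizontal a b).
Proof.
  unfold dual_horizontal; destruct (Z.even (a + b)) eqn:E; simpl; apply Z.even_spec;
    destruct_parity; exists x; lia.
Qed.

Lemma dual_edge_valid (u v : V) : dedge_valid (dual_edge u v).
Proof.
  unfold dual_edge; destruct (_ =? _);
    [apply dual_vertical_valid | apply dual_horizontal_valid].
Qed.

Lemma crosses_iff_dual_edge (u v : V) (e : DEdge) : adjG u v -> dedge_valid e ->
  (crosses e u v <-> e = dual_edge u v).
Proof.
  destruct u as [a b]; intros Hadj Hv.
  destruct (adjG_cases a b v Hadj) as [-> | [-> | [-> | ->]]];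
    rewrite ?dual_edge_up, ?dual_edge_down, ?dual_edge_right, ?dual_edge_left;
    unfold dual_vertical, dual_horizontal;
    destruct e as [p q | p q]; simpl in Hv |- *;
    match goal with |- context [Z.even ?z] => destruct (Z.even z) eqn:E end;
    split; intros H;
    try (destruct H as (H1 & H2 & H3)); try discriminate;
    try (injection H; intros; subst);
    destruct_parity; try (exfalso; lia); try (f_equal; lia); repeat split; lia.
Qed.

(* A discrete Poincare lemma over Z/2 with compact support: [h a b] and [v a b] weigh
   the G-edges from [(a, b)] to the right and upwards. *)
Section Potential.
Variables (h v : Z -> Z -> bool) (K : Z).
Hypothesis h_support : forall a b, K < Z.abs a \/ K < Z.abs b -> h a b = false.
Hypothesis v_support : forall a b, K < Z.abs a \/ K < Z.abs b -> v a b = false.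
Hypothesis curl_free :
  forall a b, xorb (xorb (h a b) (h a (b + 1))) (xorb (v a b) (v (a + 1) b)) = false.

Fixpoint row_xor (n : nat) (a b : Z) : bool :=
  match n with O => false | S n => xorb (h a b) (row_xor n (a + 1) b) end.

Definition potential (a b : Z) : bool := row_xor (Z.to_nat (K + 1 - a)) a b.

Lemma potential_step_h (a b : Z) : potential a b = xorb (h a b) (potential (a + 1) b).
Proof.
  unfold potential; destruct (Z_lt_le_dec K a).
  - rewrite h_support by lia.
    replace (Z.to_nat (K + 1 - a)) with 0%nat by lia.
    replace (Z.to_nat (K + 1 - (a + 1))) with 0%nat by lia. reflexivity.
  - replace (Z.to_nat (K + 1 - a)) with (S (Z.to_nat (K + 1 - (a + 1)))) by lia.
    reflexivity.
Qed.

Lemma potential_step_v (a b : Z) : xorb (potential a b) (potential a (b + 1)) = v a b.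
Proof.
  remember (Z.to_nat (K + 1 - a)) as n eqn:En; revert a En.
  induction n as [|n IH]; intros a En.
  - unfold potential; rewrite <- En, v_support by lia. reflexivity.
  - rewrite (potential_step_h a b), (potential_step_h a (b + 1)).
    pose proof (IH (a + 1) ltac:(lia)) as Hright.
    pose proof (curl_free a b) as Hcurl.
    destruct (h a b), (h a (b + 1)), (v a b), (v (a + 1) b),
      (potential (a + 1) b), (potential (a + 1) (b + 1)); simpl in *; congruence.
Qed.

Lemma potential_outside (a b : Z) : K < Z.abs a \/ K < Z.abs b -> potential a b = false.
Proof.
  assert (Hrow : forall n a b, K < Z.abs b -> row_xor n a b = false).
  { induction n as [|n IH]; intros a' b' Hb; simpl; auto.
    rewrite h_support, IH by lia. reflexivity. }
  intros Hout.
  destruct (Z_lt_le_dec K (Z.abs b)) as [Hb | Hb]; [apply Hrow; exact Hb |].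
  destruct (Z_lt_le_dec K a) as [Ha | Ha].
  { unfold potential; replace (Z.to_nat (K + 1 - a)) with 0%nat by lia. reflexivity. }
  (* Left of the support, [v] vanishes, so the potential is constant up each column. *)
  assert (Hcol : forall n, potential a b = potential a (b + Z.of_nat n)).
  { induction n as [|n IH]; [rewrite Z.add_0_r; reflexivity |].
    pose proof (potential_step_v a (b + Z.of_nat n)) as Hstep.
    rewrite v_support in Hstep by lia.
    rewrite Nat2Z.inj_succ, <- Z.add_1_r, Z.add_assoc, IH.
    destruct (potential a (b + Z.of_nat n)), (potential a (b + Z.of_nat n + 1));
      simpl in *; congruence. }
  rewrite (Hcol (Z.to_nat (K + 1 - b))). apply Hrow. lia.
Qed.

End Potential.

Ltac by_allowed_patterns HA :=
  unfold allowed in HA; repeat destruct HA as [HA | HA]; injection HA;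
  intros E1 E2 E3 E4; rewrite ?E1, ?E2, ?E3, ?E4; reflexivity.

Lemma black_left_of_white (a b : Z) : Z.even (a + b) = false -> black (a - 1) b.
Proof. intros E; unfold black; destruct_parity; apply Z.even_spec; exists x; lia. Qed.

Lemma black_below_of_white (a b : Z) : Z.even (a + b) = false -> black a (b - 1).
Proof. intros E; unfold black; destruct_parity; apply Z.even_spec; exists x; lia. Qed.

Section Phi.
Variable w : config.
Hypothesis Hw : Omega w.

Lemma phi_dual_vertical (a b : Z) :
  phi w (dual_vertical a b) = xorb (w (a, b)) (w (a, b + 1)).
Proof.
  unfold dual_vertical; destruct (Z.even (a + b)) eqn:E; simpl; unfold hsplit.
  - pose proof (Hw a b E) as HA; by_allowed_patterns HA.
  - pose proof (Hw _ _ (black_left_of_white a b E)) as HA.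
    rewrite Z.sub_add in HA |- *; by_allowed_patterns HA.
Qed.

Lemma phi_dual_horizontal (a b : Z) :
  phi w (dual_horizontal a b) = xorb (w (a, b)) (w (a + 1, b)).
Proof.
  unfold dual_horizontal; destruct (Z.even (a + b)) eqn:E; simpl; unfold vsplit;
    rewrite Z.add_simpl_r.
  - rewrite Z.sub_add; pose proof (Hw a b E) as HA; by_allowed_patterns HA.
  - replace (b - 2 + 1) with (b - 1) by ring.
    pose proof (Hw _ _ (black_below_of_white a b E)) as HA.
    rewrite Z.sub_add in HA |- *; by_allowed_patterns HA.
Qed.

Lemma phi_dual_edge (u v : V) : adjG u v -> phi w (dual_edge u v) = xorb (w u) (w v).
Proof.
  destruct u as [a b]; intros Hadj.
  destruct (adjG_cases a b v Hadj) as [-> | [-> | [-> | ->]]].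
  - rewrite dual_edge_up; apply phi_dual_vertical.
  - rewrite dual_edge_down, phi_dual_vertical, Z.sub_add; apply xorb_comm.
  - rewrite dual_edge_right; apply phi_dual_horizontal.
  - rewrite dual_edge_left, phi_dual_horizontal, Z.sub_add; apply xorb_comm.
Qed.

Lemma present_dual_edge (u v : V) : present w (dual_edge u v) <-> phi w (dual_edge u v) = true.
Proof. unfold present; pose proof (dual_edge_valid u v); tauto. Qed.

Lemma asbool_present_dual_edge (u v : V) : adjG u v ->
  asbool (present w (dual_edge u v)) = xorb (w u) (w v).
Proof.
  intros Hadj; rewrite (asbool_iff _ _ (present_dual_edge u v)), asbool_eq_true.
  apply phi_dual_edge; exact Hadj.
Qed.

End Phi.

Lemma list_upper_bound {A : Type} (f : A -> Z) (L : list A) :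
  exists M, forall x, In x L -> f x <= M.
Proof.
  induction L as [|y L [M HM]]; [exists 0; intros _ [] |].
  exists (Z.max (f y) M); intros x [<- | Hx]; [lia | specialize (HM x Hx); lia].
Qed.

Definition dedge_size (e : DEdge) : Z :=
  match e with DH p q | DV p q => Z.abs p + Z.abs q end.

Lemma even_add_one (z : Z) : Z.even (z + 1) = negb (Z.even z).
Proof. rewrite Z.add_1_r, Z.even_succ, <- Z.negb_even. reflexivity. Qed.

Lemma dual_horizontal_black_face (a b : Z) : Z.even (a + b) = true ->
  dual_horizontal a (b + 1) = dual_horizontal a b.
Proof.
  intros E; unfold dual_horizontal.
  rewrite Z.add_assoc, even_add_one, E; simpl. f_equal; ring.
Qed.

Lemma dual_vertical_black_face (a b : Z) : Z.even (a + b) = true ->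
  dual_vertical (a + 1) b = dual_vertical a b.
Proof.
  intros E; unfold dual_vertical.
  rewrite <- Z.add_assoc, (Z.add_comm 1), Z.add_assoc, even_add_one, E; simpl. f_equal; ring.
Qed.

(* The centre of a white face is the dual vertex encoded by [(a + 1, b)]. *)
Lemma white_face_star (a b : Z) : Z.even (a + b) = false ->
  In (a + 1, b) (endpoints (dual_horizontal a b)) /\
  In (a + 1, b) (endpoints (dual_horizontal a (b + 1))) /\
  In (a + 1, b) (endpoints (dual_vertical a b)) /\
  In (a + 1, b) (endpoints (dual_vertical (a + 1) b)).
Proof.
  intros E; unfold dual_horizontal, dual_vertical.
  rewrite Z.add_assoc, <- (Z.add_assoc a 1 b), (Z.add_comm 1 b), Z.add_assoc,
    even_add_one, E; simpl.
  repeat split; [right; left | left | right; left | left]; f_equal; ring.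
Qed.

Lemma xorb4_of_agree (c1 c2 c3 c4 p1 p2 p3 p4 : bool) :
  (c1 || c2 || c3 || c4 = true -> c1 = p1 /\ c2 = p2 /\ c3 = p3 /\ c4 = p4) ->
  xorb (xorb p1 p2) (xorb p3 p4) = false -> xorb (xorb c1 c2) (xorb c3 c4) = false.
Proof.
  destruct c1, c2, c3, c4; intros Hagree Hp; auto;
    destruct (Hagree eq_refl) as (<- & <- & <- & <-); exact Hp.
Qed.

Section ClosedEdgeSet.
Variable w : config.
Hypothesis Hw : Omega w.
Variable C : DEdge -> Prop.
Hypothesis C_present : forall e, C e -> present w e.
Hypothesis C_closed : forall e f, C e -> present w f -> share_endpoint e f -> C f.
Hypothesis C_finite : exists L, forall e, C e -> In e L.

Lemma C_star_eq_present (z : V) (e f : DEdge) :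
  In z (endpoints e) -> In z (endpoints f) -> C e ->
  asbool (C f) = asbool (present w f).
Proof.
  intros He Hf HCe; apply asbool_iff; split; [apply C_present |].
  intros Hpf; apply (C_closed e f HCe Hpf); exists z; split; assumption.
Qed.

Lemma present_around_square (a b : Z) :
  xorb (xorb (asbool (present w (dual_horizontal a b)))
             (asbool (present w (dual_horizontal a (b + 1)))))
       (xorb (asbool (present w (dual_vertical a b)))
             (asbool (present w (dual_vertical (a + 1) b)))) = false.
Proof.
  rewrite <- dual_edge_right, <- (dual_edge_right a (b + 1)), <- dual_edge_up,
    <- (dual_edge_up (a + 1) b), !asbool_present_dual_edge by (exact Hw || (red; simpl; lia)).
  destruct (w (a, b)), (w (a + 1, b)), (w (a, b + 1)), (w (a + 1, b + 1)); reflexivity.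
Qed.

Lemma C_curl_free (a b : Z) :
  xorb (xorb (asbool (C (dual_horizontal a b))) (asbool (C (dual_horizontal a (b + 1)))))
       (xorb (asbool (C (dual_vertical a b))) (asbool (C (dual_vertical (a + 1) b)))) = false.
Proof.
  destruct (Z.even (a + b)) eqn:E.
  - rewrite dual_horizontal_black_face, dual_vertical_black_face by exact E.
    destruct (asbool (C (dual_horizontal a b))), (asbool (C (dual_vertical a b))); reflexivity.
  - (* Around a dual vertex, [C] contains either no edge or every present one, and
       the present edges there are even in number. *)
    apply xorb4_of_agree with (2 := present_around_square a b).
    destruct (white_face_star a b E) as (I1 & I2 & I3 & I4).
    intros Hany; rewrite !orb_true_iff in Hany.
    destruct Hany as [[[H | H] | H] | H]; apply (proj1 (asbool_true_iff _)) in H;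
      repeat split;
      match type of H with C ?e => apply (C_star_eq_present (a + 1, b) e); auto end.
Qed.

Lemma C_coboundary : exists (s : V -> bool) (K : Z),
  (forall u v, adjG u v -> asbool (C (dual_edge u v)) = xorb (s u) (s v)) /\
  (forall z, K < Z.abs (fst z) \/ K < Z.abs (snd z) -> s z = false).
Proof.
  destruct C_finite as [L HL].
  destruct (list_upper_bound dedge_size L) as [M HM].
  set (h := fun a b => asbool (C (dual_horizontal a b))).
  set (v := fun a b => asbool (C (dual_vertical a b))).
  assert (h_support : forall a b, M + 2 < Z.abs a \/ M + 2 < Z.abs b -> h a b = false).
  { intros a b Hab; apply asboolF; intros HC%HL%HM.
    unfold dual_horizontal in HC; destruct (Z.even (a + b)); simpl in HC; lia. }
  assert (v_support : forall a b, M + 2 < Z.abs a \/ M + 2 < Z.abs b -> v a b = false).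
  { intros a b Hab; apply asboolF; intros HC%HL%HM.
    unfold dual_vertical in HC; destruct (Z.even (a + b)); simpl in HC; lia. }
  pose proof (potential_step_h h (M + 2) h_support) as Hstep_h.
  pose proof (potential_step_v h v (M + 2) h_support v_support C_curl_free) as Hstep_v.
  exists (fun z => potential h (M + 2) (fst z) (snd z)), (M + 2); split.
  - intros [a b] z Hadj; simpl.
    destruct (adjG_cases a b z Hadj) as [-> | [-> | [-> | ->]]]; simpl.
    + rewrite dual_edge_up; symmetry; apply Hstep_v.
    + rewrite dual_edge_down, xorb_comm; symmetry.
      pose proof (Hstep_v a (b - 1)) as Hv; rewrite Z.sub_add in Hv; exact Hv.
    + rewrite dual_edge_right, Hstep_h, xorb_assoc_reverse, xorb_nilpotent, xorb_false_r.
      reflexivity.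
    + rewrite dual_edge_left, (Hstep_h (a - 1)), Z.sub_add, xorb_comm, xorb_assoc_reverse,
        xorb_nilpotent, xorb_false_r. reflexivity.
  - intros [a b]; exact (potential_outside h v (M + 2) h_support v_support C_curl_free a b).
Qed.

End ClosedEdgeSet.

Lemma finite_of_not_infinite {T : Type} (S : T -> Prop) :
  ~ infinite_set S -> exists L, forall x, S x -> In x L.
Proof.
  intros Hfin; apply not_all_ex_not in Hfin as [L HL]; exists L; intros x Hx.
  apply NNPP; intros Hnot; apply HL; exists x; auto.
Qed.

Lemma infinite_set_unbounded (S : V -> Prop) : infinite_set S ->
  forall K, exists z, S z /\ (K < Z.abs (fst z) \/ K < Z.abs (snd z)).
Proof.
  intros Hinf K.
  set (box := map (fun n => Z.of_nat n - K) (seq 0 (Z.to_nat (2 * K + 1)))).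
  assert (Hbox : forall a, - K <= a <= K -> In a box).
  { intros a Ha; apply in_map_iff; exists (Z.to_nat (a + K)); split; [lia |].
    apply in_seq; lia. }
  destruct (Hinf (list_prod box box)) as [[a b] [HS Hnot]].
  exists (a, b); split; [exact HS |]; simpl.
  destruct (Z_lt_le_dec K (Z.abs a)), (Z_lt_le_dec K (Z.abs b)); auto.
  exfalso; apply Hnot, in_prod; apply Hbox; lia.
Qed.

Section Contours.
Variable w : config.

Lemma same_contour_present (r e : DEdge) : same_contour w r e -> present w e.
Proof.
  intros [Hr Hre]; induction Hre as [e f [_ [Hf _]] | | ]; auto.
Qed.

Lemma in_infinite_contour_of_same (r e : DEdge) :
  same_contour w r e -> in_infinite_contour w e -> in_infinite_contour w r.
Proof.
  intros [Hr Hre] [_ Hinf]; split; [exact Hr |].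
  intros L; destruct (Hinf L) as (f & [_ Hef] & Hf).
  exists f; split; [split; [exact Hr | eapply rt_trans; eassumption] | exact Hf].
Qed.

Definition finite_contours_from (R : list DEdge) (e : DEdge) : Prop :=
  exists r, In r R /\ ~ in_infinite_contour w r /\ same_contour w r e.

Variable R : list DEdge.

Lemma finite_contours_from_present (e : DEdge) : finite_contours_from R e -> present w e.
Proof. intros (r & _ & _ & Hre); exact (same_contour_present r e Hre). Qed.

Lemma finite_contours_from_not_infinite (e : DEdge) :
  finite_contours_from R e -> ~ in_infinite_contour w e.
Proof. intros (r & _ & Hr & Hre) He; exact (Hr (in_infinite_contour_of_same r e Hre He)). Qed.

Lemma finite_contours_from_closed (e f : DEdge) :
  finite_contours_from R e -> present w f -> share_endpoint e f -> finite_contours_from R f.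
Proof.
  intros He Hf Hef; pose proof (finite_contours_from_present e He) as Hpe.
  destruct He as (r & Hr & Hinf & [Hpr Hre]).
  exists r; split; [exact Hr | split; [exact Hinf | split; [exact Hpr |]]].
  apply rt_trans with e; [exact Hre | apply rt_step; split; [exact Hpe | split; assumption]].
Qed.

Lemma finite_contours_from_finite : exists L, forall e, finite_contours_from R e -> In e L.
Proof.
  induction R as [|r R' [L HL]]; [exists nil; intros e (r & [] & _) |].
  destruct (classic (in_infinite_contour w r)) as [Hinf | Hfin].
  - exists L; intros e (r' & [<- | Hr'] & Hn & Hre);
      [contradiction | apply HL; exists r'; auto].
  - destruct (classic (present w r)) as [Hr | Hr].
    + assert (Hfin' : ~ infinite_set (same_contour w r))
        by (intros H; apply Hfin; split; auto).
      destruct (finite_of_not_infinite _ Hfin') as [Lr HLr].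
      exists (Lr ++ L); intros e (r' & [<- | Hr'] & Hn & Hre); apply in_or_app;
        [left; auto | right; apply HL; exists r'; auto].
    + exists L; intros e (r' & [<- | Hr'] & Hn & Hre);
        [destruct Hre; contradiction | apply HL; exists r'; auto].
Qed.

Lemma present_infinite_or_finite (e : DEdge) : In e R ->
  asbool (present w e) =
  xorb (asbool (in_infinite_contour w e)) (asbool (finite_contours_from R e)).
Proof.
  intros HeR; destruct (classic (present w e)) as [He | He].
  - rewrite (asboolT _ He).
    destruct (classic (in_infinite_contour w e)) as [Hinf | Hinf].
    + rewrite (asboolT _ Hinf), asboolF; [reflexivity |].
      intros Hfin; exact (finite_contours_from_not_infinite e Hfin Hinf).
    + rewrite (asboolF _ Hinf), asboolT; [reflexivity |].
      exists e; split; [exact HeR | split; [exact Hinf | split; [exact He | apply rt_refl]]].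
  - rewrite (asboolF _ He), !asboolF; [reflexivity | |].
    + intros Hfin; exact (He (finite_contours_from_present e Hfin)).
    + intros [Hp _]; exact (He Hp).
Qed.

End Contours.

Fixpoint path_edges (x : V) (l : list V) : list (V * V) :=
  match l with nil => nil | v :: l' => (x, v) :: path_edges v l' end.

Fixpoint path_xor (f : V -> V -> bool) (x : V) (l : list V) : bool :=
  match l with nil => false | v :: l' => xorb (f x v) (path_xor f v l') end.

Lemma last_cons_default {A : Type} (v d : A) (l : list A) : last (v :: l) d = last l v.
Proof.
  revert v d; induction l as [|z l IH]; intros v d; [reflexivity |].
  change (last (z :: l) d = last (z :: l) v); rewrite !IH; reflexivity.
Qed.

Lemma path_edges_adjG (x : V) (l : list V) (u v : V) :
  gpath x l -> In (u, v) (path_edges x l) -> adjG u v.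
Proof.
  revert x; induction l as [|z l IH]; intros x Hp Huv; [destruct Huv |].
  destruct Hp as [Hxz Hp], Huv as [Huv | Huv];
    [injection Huv as <- <-; exact Hxz | exact (IH z Hp Huv)].
Qed.

Lemma path_xor_ext (f g : V -> V -> bool) (x : V) (l : list V) :
  (forall u v, In (u, v) (path_edges x l) -> f u v = g u v) ->
  path_xor f x l = path_xor g x l.
Proof.
  revert x; induction l as [|v l IH]; intros x Hfg; simpl; [reflexivity |].
  rewrite (Hfg x v (or_introl eq_refl)), (IH v); [reflexivity |].
  intros u z Huz; apply Hfg; right; exact Huz.
Qed.

Lemma path_xor_xorb (f g : V -> V -> bool) (x : V) (l : list V) :
  path_xor (fun u v => xorb (f u v) (g u v)) x l = xorb (path_xor f x l) (path_xor g x l).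
Proof.
  revert x; induction l as [|v l IH]; intros x; simpl; [reflexivity |].
  rewrite IH; destruct (f x v), (g x v), (path_xor f v l), (path_xor g v l); reflexivity.
Qed.

Lemma path_xor_telescope (f : V -> V -> bool) (g : V -> bool) (x : V) (l : list V) :
  gpath x l -> (forall u v, adjG u v -> f u v = xorb (g u) (g v)) ->
  path_xor f x l = xorb (g x) (g (last l x)).
Proof.
  intros Hp Hf; revert x Hp; induction l as [|v l IH]; intros x Hp; cbn [path_xor].
  - simpl; rewrite xorb_nilpotent; reflexivity.
  - destruct Hp as [Hxv Hp]; rewrite (Hf x v Hxv), (IH v Hp).
    rewrite last_cons_default.
    rewrite xorb_assoc_reverse, <- (xorb_assoc (g v)), xorb_nilpotent, xorb_false_l.
    reflexivity.
Qed.

Lemma gpath_exists (x y : V) : exists l, gpath_from_to x y l.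
Proof.
  destruct y as [c d].
  remember (Z.to_nat (Z.abs (fst x - c) + Z.abs (snd x - d))) as n eqn:En.
  revert x En; induction n as [|n IH]; intros [a b] En; simpl in En.
  - exists nil; split; [exact I | simpl; f_equal; lia].
  - assert (Hstep : forall z, adjG (a, b) z ->
              n = Z.to_nat (Z.abs (fst z - c) + Z.abs (snd z - d)) ->
              exists l, gpath_from_to (a, b) (c, d) l).
    { intros z Hz Hn; destruct (IH z Hn) as [l [Hp Hl]].
      exists (z :: l); split; [split; assumption |].
      rewrite <- Hl; apply last_cons_default. }
    destruct (Z_lt_le_dec a c); [apply (Hstep (a + 1, b)); cbv [adjG fst snd]; lia |].
    destruct (Z_lt_le_dec c a); [apply (Hstep (a - 1, b)); cbv [adjG fst snd]; lia |].
    destruct (Z_lt_le_dec b d); [apply (Hstep (a, b + 1)); cbv [adjG fst snd]; lia |].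
    apply (Hstep (a, b - 1)); cbv [adjG fst snd]; lia.
Qed.

Section Crossings.
Variable w : config.
Hypothesis Hw : Omega w.

Lemma crossing_infinite_iff (u v : V) : adjG u v ->
  (exists e, dedge_valid e /\ crosses e u v /\ in_infinite_contour w e) <->
  in_infinite_contour w (dual_edge u v).
Proof.
  intros Huv; split.
  - intros (e & He & Hc & Hinf); apply crosses_iff_dual_edge in Hc as ->; assumption.
  - intros Hinf; exists (dual_edge u v); split; [apply dual_edge_valid |].
    split; [apply crosses_iff_dual_edge; auto using dual_edge_valid | exact Hinf].
Qed.

Lemma odd_crossing_count (x : V) (l : list V) : gpath x l ->
  Nat.odd (crossing_count w x l) =
  path_xor (fun u v => asbool (in_infinite_contour w (dual_edge u v))) x l.
Proof.
  revert x; induction l as [|v l IH]; intros x Hp; simpl; [reflexivity |].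
  destruct Hp as [Hxv Hp]; rewrite <- (IH v Hp).
  destruct excluded_middle_informative as [Hc | Hc]; simpl.
  - rewrite asboolT by (apply crossing_infinite_iff; assumption).
    rewrite Nat.odd_succ, <- Nat.negb_odd; reflexivity.
  - rewrite asboolF by (rewrite <- crossing_infinite_iff; assumption). reflexivity.
Qed.

Lemma crossing_count_nonzero (x : V) (l : list V) :
  crossing_count w x l <> 0%nat -> exists e, in_infinite_contour w e.
Proof.
  revert x; induction l as [|v l IH]; intros x Hc; simpl in Hc; [congruence |].
  destruct excluded_middle_informative as [(e & _ & _ & He) | _]; eauto.
Qed.

Lemma coboundary_constant_on_clusters (C : DEdge -> Prop) (s : V -> bool) :
  (forall e, C e -> present w e) ->
  (forall u v, adjG u v -> asbool (C (dual_edge u v)) = xorb (s u) (s v)) ->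
  forall x z, same_cluster w x z -> s x = s z.
Proof.
  intros C_present Hs x z Hxz.
  induction Hxz as [u v [Huv Heq] | | ]; [| reflexivity | congruence].
  assert (HC : asbool (C (dual_edge u v)) = false).
  { apply asboolF; intros HC%C_present%present_dual_edge.
    rewrite phi_dual_edge, Heq, xorb_nilpotent in HC by assumption; discriminate. }
  rewrite Hs in HC by exact Huv.
  destruct (s u), (s v); simpl in HC; congruence.
Qed.

Lemma crossing_parity (x y : V) (l : list V) :
  in_infinite_cluster w false x -> in_infinite_cluster w true y -> gpath_from_to x y l ->
  Nat.odd (crossing_count w x l) = true.
Proof.
  intros [Hwx Hx] [Hwy Hy] [Hp Hl].
  set (R := map (fun p => dual_edge (fst p) (snd p)) (path_edges x l)).
  destruct (C_coboundary w Hw (finite_contours_from w R) (finite_contours_from_present w R)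
              (finite_contours_from_closed w R) (finite_contours_from_finite w R))
    as (s & K & Hs & Hout).
  assert (Hzero : forall z, infinite_set (same_cluster w z) -> s z = false).
  { intros z Hz; destruct (infinite_set_unbounded _ Hz K) as (z' & Hzz' & Hfar).
    rewrite (coboundary_constant_on_clusters _ s (finite_contours_from_present w R) Hs z z');
      auto. }
  rewrite odd_crossing_count by exact Hp.
  rewrite (path_xor_ext _ (fun u v =>
             xorb (xorb (w u) (w v)) (asbool (finite_contours_from w R (dual_edge u v))))).
  - rewrite path_xor_xorb, (path_xor_telescope _ w), (path_xor_telescope _ s), Hl,
      (Hzero x Hx), (Hzero y Hy), Hwx, Hwy by auto.
    reflexivity.
  - intros u v Huv; pose proof (path_edges_adjG x l u v Hp Huv) as Hadj.
    rewrite <- asbool_present_dual_edge by assumption.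
    rewrite (present_infinite_or_finite w R).
    + destruct (asbool _), (asbool _); reflexivity.
    + apply in_map_iff; exists (u, v); auto.
Qed.

End Crossings.

Theorem lemma2p8 (w : config) (Hw : Omega w) :
  (forall (x y : V) (l : list V),
      in_infinite_cluster w false x ->
      in_infinite_cluster w true y ->
      gpath_from_to x y l ->
      Nat.odd (crossing_count w x l) = true) /\
  ((exists x, in_infinite_cluster w false x) ->
   (exists y, in_infinite_cluster w true y) ->
   exists e, in_infinite_contour w e).
Proof.
  split; [exact (crossing_parity w Hw) |].
  intros [x Hx] [y Hy].
  destruct (gpath_exists x y) as [l Hl].
  apply (crossing_count_nonzero w x l); intros H0.
  pose proof (crossing_parity w Hw x y l Hx Hy Hl) as Hodd.
  rewrite H0 in Hodd; discriminate.
Qed.
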